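(* Let $F$ be a minimally unsatisfiable clause-set and $v\neq w$ two non-1-singular variables for $F$. Let $C$ be the main clause for $v$ and $D$ the main clause for $w$. 1. If $C = D$, then $w$ is not singular for $\mathrm{DP}_v(F)$ and $v$ is not singular for $\mathrm{DP}_w(F)$. 2. If $C\neq D$, then $w$ is non-1-singular for $\mathrm{DP}_v(F)$ and $v$ is non-1-singular for $\mathrm{DP}_w(F)$.
   Context: Literals are variables $v$ and complements $\overline{v}$; a clause is a finite set of literals with no complementary pair; a clause-set is a finite set of clauses; $\mathrm{ldeg}_F(x)$ is the number of clauses of $F$ containing literal $x$. $\mathrm{DP}_v(F) := \{C \in F : v \notin \mathrm{var}(C)\} \cup \{(C \cup D)\setminus\{v,\overline{v}\} : C, D \in F,\ C \cap \overline{D} = \{v\}\}$. A variable $v$ is singular for $F$ if $\min(\mathrm{ldeg}_F(v),\mathrm{ldeg}_F(\overline{v}))=1$; it is 1-singular if $\mathrm{ldeg}_F(v)=\mathrm{ldeg}_F(\overline{v})=1$, and non-1-singular if it is singular but not 1-singular. For a non-1-singular variable $v$ the singular literal is the unique literal $x$ with underlying variable $v$ and $\mathrm{ldeg}_F(x)=1$, and the main clause is the unique clause of $F$ containing $x$. *)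

From HB Require Import structures.
From mathcomp Require Import all_boot.
From mathcomp Require Import finmap.

Set Implicit Arguments.
Unset Strict Implicit.
Unset Printing Implicit Defensive.

Local Open Scope fset_scope.

Section ClauseSets.
Variable V : choiceType.

(* A literal is a pair (variable, sign): (v, true) is the positive literal v,
   (v, false) is the complement \overline{v}. *)
Definition lit := (V * bool)%type.
Definition lvar (x : lit) : V := x.1.
Definition compl (x : lit) : lit := (x.1, ~~ x.2).
Definition poslit (v : V) : lit := (v, true).
Definition neglit (v : V) : lit := (v, false).

Definition is_clause (C : {fset lit}) : bool :=
  [forall x : C, compl (val x) \notin C].
Definition is_clause_set (F : {fset {fset lit}}) : Prop :=
  forall C, C \in F -> is_clause C.

Definition cvar (C : {fset lit}) : {fset V} := [fset lvar x | x in C].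
Definition ccompl (C : {fset lit}) : {fset lit} := [fset compl x | x in C].

Definition sat_lit (phi : V -> bool) (x : lit) : bool := phi x.1 == x.2.
Definition sat_clause (phi : V -> bool) (C : {fset lit}) : bool :=
  [exists x : C, sat_lit phi (val x)].
Definition satisfiable (F : {fset {fset lit}}) : Prop :=
  exists phi : V -> bool, forall C, C \in F -> sat_clause phi C.

Definition MU (F : {fset {fset lit}}) : Prop :=
  ~ satisfiable F /\ forall G, G `<` F -> satisfiable G.

Definition ldeg (F : {fset {fset lit}}) (x : lit) : nat :=
  #|` [fset C in F | x \in C] |.

Definition DP (v : V) (F : {fset {fset lit}}) : {fset {fset lit}} :=
  [fset C in F | v \notin cvar C]
  `|` [fset ((C `|` D) `\` [fset poslit v; neglit v]) | C in F, D in F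
         & (C `&` ccompl D == [fset poslit v])].

Definition singular (F : {fset {fset lit}}) (v : V) : Prop :=
  minn (ldeg F (poslit v)) (ldeg F (neglit v)) = 1.
Definition one_singular (F : {fset {fset lit}}) (v : V) : Prop :=
  ldeg F (poslit v) = 1 /\ ldeg F (neglit v) = 1.
Definition non1singular (F : {fset {fset lit}}) (v : V) : Prop :=
  singular F v /\ ~ one_singular F v.

Definition main_clause (F : {fset {fset lit}}) (v : V) (C : {fset lit}) : Prop :=
  C \in F /\ exists x : lit, [/\ lvar x = v, ldeg F x = 1 & x \in C].

End ClauseSets.

(* Let x be the singular literal of v, occurring only in the main clause C.
   In a minimally unsatisfiable F every clause G containing the complement of x
   clashes with C in v only, so DP_v(F) is the image of F \ {C} under the map
   sending G to its resolvent with C if G contains the complement of x, and to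
   G otherwise.  Minimality makes this map injective: if another clause H were
   contained in the resolvent of G up to the complement of x, then flipping v in
   an assignment falsifying only G would satisfy F.  Hence for a literal z over
   another variable, the occurrences of z in DP_v(F) correspond to those in
   F \ {C}, plus one for each clause containing the complement of x if z is in C.
   For the singular literal y of w (in D) this gives degree 1 when D <> C and at
   least 2 when D = C, while the complement of y keeps degree at least 2. *)

From HB Require Import structures.
From mathcomp Require Import all_boot.
From mathcomp Require Import finmap.
From mathcomp Require Import zify.

Set Implicit Arguments.
Unset Strict Implicit.
Unset Printing Implicit Defensive.

Local Open Scope fset_scope.

Section ClauseSets.
Variable V : choiceType.
Implicit Types (F : {fset {fset lit V}}) (v : V) (A B G : {fset lit V}) (z : lit V).

Lemma complK z : compl (compl z) = z.
Proof. by case: z => a b; rewrite /compl /= negbK. Qed.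

Lemma lvar_compl z : lvar (compl z) = lvar z.
Proof. by []. Qed.

Lemma lit_cases z z' : lvar z = lvar z' -> z = z' \/ z = compl z'.
Proof. by case: z z' => a b [a' b'] /= ->; rewrite /compl /=; case: b; case: b'; auto. Qed.

Lemma in_ccompl A z : (z \in ccompl A) = (compl z \in A).
Proof.
apply/imfsetP/idP => [[y Hy ->]|H]; first by rewrite complK.
by exists (compl z); rewrite ?complK.
Qed.

Lemma in_fset2_lit v z : (z \in [fset poslit v; neglit v]) = (lvar z == v).
Proof.
case: z => a b; rewrite in_fset2 /poslit /neglit !xpair_eqE /lvar /=.
by case: b; case: (a == v).
Qed.

Lemma cvarP v A : reflect (exists2 z, z \in A & lvar z = v) (v \in cvar A).
Proof.
apply: (iffP idP) => [/imfsetP [z Hz ->]|[z Hz <-]]; first by exists z.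
by apply/imfsetP; exists z.
Qed.

Lemma sat_clauseP phi A :
  reflect (exists2 z, z \in A & sat_lit phi z) (sat_clause phi A).
Proof.
apply: (iffP existsP) => [[k Hk]|[k kA Hk]]; first by exists (val k) => //; exact: fsvalP.
by exists [` kA].
Qed.

Lemma sat_lit_compl phi z : sat_lit phi (compl z) = ~~ sat_lit phi z.
Proof. by case: z => a b; rewrite /sat_lit /compl /=; case: (phi a); case: b. Qed.

Definition set_lit (phi : V -> bool) z : V -> bool :=
  fun u => if u == lvar z then z.2 else phi u.

Lemma sat_set_lit phi z z' :
  sat_lit (set_lit phi z) z' = if lvar z' == lvar z then z' == z else sat_lit phi z'.
Proof.
case: z z' => a b [a' b']; rewrite /sat_lit /set_lit /lvar /=.
by case: (eqVneq a' a) => [->|//]; rewrite xpair_eqE eqxx eq_sym.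
Qed.

Lemma clause_compl_notin A z : is_clause A -> z \in A -> compl z \notin A.
Proof. by move=> /forallP H Hz; exact: (H [` Hz]). Qed.

Lemma mem_clash A B z : A `&` ccompl B = [fset z] -> z \in A /\ compl z \in B.
Proof. by move/fsetP/(_ z); rewrite in_fsetI in_ccompl in_fset1 eqxx => /andP. Qed.

Lemma clash_sym A B z : A `&` ccompl B = [fset z] -> B `&` ccompl A = [fset compl z].
Proof.
move=> /fsetP clash; apply/fsetP => m.
have := clash (compl m); rewrite !in_fsetI !in_ccompl !in_fset1 complK andbC => ->.
by apply/eqP/eqP => [<-|->]; rewrite complK.
Qed.

Lemma in_occurrences F z G : (G \in [fset G' in F | z \in G']) = (G \in F) && (z \in G).
Proof. by rewrite !inE. Qed.

Lemma ldeg1_clause_uniq F z G1 G2 : ldeg F z = 1 ->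
  G1 \in F -> z \in G1 -> G2 \in F -> z \in G2 -> G1 = G2.
Proof.
rewrite /ldeg => /eqP /cardfs1P [K HK] G1F zG1 G2F zG2.
have : G1 \in [fset G in F | z \in G] by rewrite in_occurrences G1F zG1.
have : G2 \in [fset G in F | z \in G] by rewrite in_occurrences G2F zG2.
by rewrite HK !in_fset1 => /eqP -> /eqP ->.
Qed.

Lemma ldeg_gt1P F z :
  reflect (exists G1 G2, [/\ G1 \in F, z \in G1, G2 \in F, z \in G2 & G1 != G2])
          (1 < ldeg F z).
Proof.
rewrite /ldeg; set S := [fset _ in _ | _]; apply: (iffP idP) => [S_gt1|].
  have /fset0Pn [G1 SG1] : S != fset0 by rewrite -cardfs_gt0; lia.
  have /fset0Pn [G2] : S `\ G1 != fset0.
    by rewrite -cardfs_gt0; move: S_gt1; rewrite (cardfsD1 G1) SG1; lia.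
  rewrite in_fsetD1 => /andP [neq SG2].
  move: SG1 SG2; rewrite !in_occurrences => /andP [? ?] /andP [? ?].
  by exists G1, G2; split; rewrite // eq_sym.
move=> [G1 [G2 [G1F zG1 G2F zG2 neq]]].
have : [fset G1; G2] `<=` S.
  by apply/fsubsetP => K; rewrite in_fset2 in_occurrences => /orP [] /eqP ->; apply/andP.
by move/fsubset_leq_card; rewrite cardfs2 neq.
Qed.

Lemma non1singular_ldeg_compl F v x :
  non1singular F v -> lvar x = v -> ldeg F x = 1 -> 1 < ldeg F (compl x).
Proof.
move=> + ev; case: x ev => a b /= <-; rewrite /non1singular /singular /one_singular /compl.
by case: b => /= [[h1 h2] e | [h1 h2] e]; rewrite /poslit /neglit e in h1 h2 *; lia.
Qed.

Lemma not_singular_of_ldeg F v y :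
  lvar y = v -> 1 < ldeg F y -> 1 < ldeg F (compl y) -> ~ singular F v.
Proof. by case: y => a b /= <-; rewrite /singular /compl /poslit /neglit; case: b => /=; lia. Qed.

Lemma non1singular_of_ldeg F v y :
  lvar y = v -> ldeg F y = 1 -> 1 < ldeg F (compl y) -> non1singular F v.
Proof.
case: y => a b /= <-.
rewrite /non1singular /singular /one_singular /compl /poslit /neglit.
by case: b => /= h1 h2; split; lia.
Qed.

Lemma DP_kept v F G : G \in F -> v \notin cvar G -> G \in DP v F.
Proof. by move=> GF Gv; rewrite /DP in_fsetU !inE GF Gv. Qed.

Lemma DP_resolvent v F A B z : A \in F -> B \in F -> lvar z = v ->
  A `&` ccompl B = [fset z] -> (A `|` B) `\` [fset poslit v; neglit v] \in DP v F.
Proof.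
have res A' B' : A' \in F -> B' \in F -> A' `&` ccompl B' = [fset poslit v] ->
    (A' `|` B') `\` [fset poslit v; neglit v] \in DP v F.
  move=> A'F B'F clash; rewrite /DP in_fsetU; apply/orP; right.
  by apply/imfset2P; exists A' => //; exists B'; rewrite // inE B'F clash eqxx.
case: z => a [] AF BF /= av clash; subst v; first exact: res.
by rewrite fsetUC; apply: res; rewrite // (clash_sym clash).
Qed.

Lemma DP_cases v F K : K \in DP v F ->
  (K \in F /\ v \notin cvar K) \/
  exists A B, [/\ A \in F, B \in F, poslit v \in A, neglit v \in B
                & K = (A `|` B) `\` [fset poslit v; neglit v]].
Proof.
rewrite /DP in_fsetU => /orP [|/imfset2P [A AF [B]]]; first by rewrite !inE => /andP; left.
rewrite inE => /andP [BF /eqP /mem_clash [vA vB]] ->; right.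
by exists A, B.
Qed.

End ClauseSets.

Section MinimallyUnsatisfiable.
Variables (V : choiceType) (F : {fset {fset lit V}}).
Hypothesis F_unsat : ~ satisfiable F.
Hypothesis F_min : forall G, G `<` F -> satisfiable G.

Lemma exists_falsified_clause phi : exists2 G, G \in F & ~~ sat_clause phi G.
Proof.
have [all_sat|] := boolP [forall G : F, sat_clause phi (val G)].
  by case: F_unsat; exists phi => G GF; exact: (forallP all_sat [` GF]).
by move=> /forallPn [[G GF] /= nG]; exists G.
Qed.

Lemma falsify_only G : G \in F -> exists phi,
  (forall H, H \in F -> H != G -> sat_clause phi H) /\ ~~ sat_clause phi G.
Proof.
move=> GF; have [phi sat_rest] := F_min (fproperD1 GF).
have others H : H \in F -> H != G -> sat_clause phi H.
  by move=> HF neq; apply: sat_rest; rewrite in_fsetD1 neq HF.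
exists phi; split=> //; apply/negP => sG; apply: F_unsat; exists phi => H HF.
by case: (eqVneq H G) => [->|]; last exact: others.
Qed.

(* Flip the variable of l in an assignment falsifying only G: the clause H now
   falsified contains compl l and can share no other clash with G. *)
Lemma MU_unique_clash G l : G \in F -> l \in G ->
  exists2 H, H \in F & H `&` ccompl G = [fset compl l].
Proof.
move=> GF lG; have [phi [sat_rest nG]] := falsify_only GF.
have [H HF nH] := exists_falsified_clause (set_lit phi l).
have HG : H != G.
  by apply: contraNneq nH => ->; apply/sat_clauseP; exists l; rewrite // sat_set_lit !eqxx.
have only_compl_l m : m \in H -> sat_lit phi m -> m = compl l.
  move=> mH sm; apply/eqP; apply: contraNT nH => ml; apply/sat_clauseP; exists m => //.
  rewrite sat_set_lit; case: ifP => // /eqP e.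
  by case: (lit_cases e) => e'; subst m; rewrite ?eqxx in ml *.
have [h hH sh] := sat_clauseP _ _ (sat_rest H HF HG).
exists H => //; apply/fsetP => m; rewrite in_fsetI in_ccompl in_fset1.
apply/andP/eqP => [[mH mG]|->]; last by rewrite complK -(only_compl_l h).
apply: only_compl_l mH _; apply: contraNT nG => nm.
by apply/sat_clauseP; exists (compl m); rewrite // sat_lit_compl.
Qed.

End MinimallyUnsatisfiable.

Section SingularElimination.
Variables (V : choiceType) (F : {fset {fset lit V}}) (v : V).
Variables (C : {fset lit V}) (x : lit V).
Hypothesis F_clauses : is_clause_set F.
Hypothesis F_unsat : ~ satisfiable F.
Hypothesis F_min : forall G, G `<` F -> satisfiable G.
Hypothesis C_in_F : C \in F.
Hypothesis x_in_C : x \in C.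
Hypothesis x_var : lvar x = v.
Hypothesis x_deg1 : ldeg F x = 1.
Implicit Types (G H K : {fset lit V}) (z : lit V).

Let resolve G := (C `|` G) `\` [fset poslit v; neglit v].
Let image G := if compl x \in G then resolve G else G.

Lemma main_clause_uniq G : G \in F -> x \in G -> G = C.
Proof. by move=> GF xG; exact: ldeg1_clause_uniq x_deg1 GF xG C_in_F x_in_C. Qed.

Lemma neq_main_of_compl_x G : compl x \in G -> G != C.
Proof. by move=> xG; apply: contraNneq (clause_compl_notin (F_clauses C_in_F) x_in_C) => <-. Qed.

Lemma lit_var_v_cases z : lvar z = v -> z = x \/ z = compl x.
Proof. by rewrite -x_var; exact: lit_cases. Qed.

Lemma lit_var_neq G z : G \in F -> G != C -> z \in G -> z != compl x -> lvar z != v.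
Proof.
move=> GF GC zG zx; apply: contraNneq GC => /lit_var_v_cases [e|e]; subst z.
  by rewrite (main_clause_uniq GF zG).
by rewrite eqxx in zx.
Qed.

Lemma resolve_in_DP G : G \in F -> compl x \in G -> resolve G \in DP v F.
Proof.
move=> GF xG; have [H HF clash] := MU_unique_clash F_unsat F_min GF xG.
rewrite complK in clash; have [xH _] := mem_clash clash.
by rewrite (main_clause_uniq HF xH) in clash; exact: DP_resolvent clash.
Qed.

(* If H were covered by the resolvent of G up to compl x, the literal satisfying
   H in an assignment falsifying only G lies in C; flipping v to satisfy compl x
   then satisfies all of F. *)
Lemma resolvent_not_covering G H : G \in F -> compl x \in G -> H \in F -> H != G ->
  ~ (forall z, z \in H -> z != compl x -> z \in resolve G).
Proof.
move=> GF xG HF HG cover; have [phi [sat_rest nG]] := falsify_only F_unsat F_min GF.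
have [b bH sb] := sat_clauseP _ _ (sat_rest H HF HG).
have bx : b != compl x.
  by apply: contraNneq nG => e; apply/sat_clauseP; exists b; rewrite // e.
have /andP [bv bC] : (lvar b != v) && (b \in C).
  move: (cover b bH bx); rewrite /resolve in_fsetD in_fset2_lit in_fsetU.
  case/andP=> -> /orP [//|bG]; by move/negP: nG; case; apply/sat_clauseP; exists b.
apply: F_unsat; exists (set_lit phi (compl x)) => K KF; apply/sat_clauseP.
have [xK|xK] := boolP (compl x \in K); first by exists (compl x); rewrite // sat_set_lit !eqxx.
have KG : K != G by apply: contraNneq xK => ->.
have [k kK sk] := sat_clauseP _ _ (sat_rest K KF KG).
have [kv|kv] := eqVneq (lvar k) v; last first.
  by exists k; rewrite // sat_set_lit lvar_compl x_var (negbTE kv).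
case: (lit_var_v_cases kv) => e; subst k; last by rewrite kK in xK.
rewrite (main_clause_uniq KF kK).
by exists b; rewrite // sat_set_lit lvar_compl x_var (negbTE bv).
Qed.

Lemma image_in_DP G : G \in F -> G != C -> image G \in DP v F.
Proof.
move=> GF GC; rewrite /image; case: ifP => xG; first exact: resolve_in_DP.
apply: DP_kept => //; apply/cvarP => -[z zG zv].
have zx : z != compl x by apply: contraFneq xG => <-.
by move: (lit_var_neq GF GC zG zx); rewrite zv eqxx.
Qed.

Lemma mem_image G z : lvar z != v -> z \in G -> z \in image G.
Proof.
move=> zv zG; rewrite /image; case: ifP => // _.
by rewrite /resolve in_fsetD in_fset2_lit zv in_fsetU zG orbT.
Qed.

Lemma mem_image_main G z : lvar z != v -> compl x \in G -> z \in C -> z \in image G.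
Proof. by move=> zv xG zC; rewrite /image xG /resolve in_fsetD in_fset2_lit zv in_fsetU zC. Qed.

Lemma image_sub G z : z \in image G -> z \in G \/ z \in C.
Proof.
rewrite /image; case: ifP => _; last by left.
by rewrite /resolve => /fsetDP [/fsetUP [] ? _]; auto.
Qed.

Lemma image_inj G1 G2 : G1 \in F -> G2 \in F -> G1 != C -> G2 != C ->
  image G1 = image G2 -> G1 = G2.
Proof.
have covered G H : G \in F -> compl x \in G -> H \in F -> H != C ->
    image H = resolve G -> H = G.
  move=> GF xG HF HC e; have [//|HG] := eqVneq H G.
  case: (resolvent_not_covering GF xG HF HG) => z zH zx.
  by rewrite -e; exact: mem_image (lit_var_neq HF HC zH zx) zH.
move=> G1F G2F G1C G2C; rewrite {1}/image; case: ifP => xG1 e.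
  by apply/esym/covered.
by move: e; rewrite /image; case: ifP => // xG2 e; apply: covered; rewrite // /image xG1.
Qed.

Lemma image_surj K : K \in DP v F -> exists2 G, G \in F /\ G != C & K = image G.
Proof.
case/DP_cases => [[KF Kv]|[A [B [AF BF vA vB ->]]]].
  have Kvar z : z \in K -> lvar z != v.
    by move=> zK; apply: contraNneq Kv => <-; apply/cvarP; exists z.
  have xK : compl x \notin K by apply/negP => /Kvar/eqP; apply.
  have KC : K != C by apply: contraTneq x_in_C => <-; apply/negP => /Kvar/eqP; apply.
  by exists K; last rewrite /image (negbTE xK).
have [ex|ex] := lit_var_v_cases (erefl : lvar (poslit v) = v).
  rewrite ex in vA; rewrite -[neglit v]/(compl (poslit v)) ex in vB.
  exists B; first by split=> //; exact: neq_main_of_compl_x.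
  by rewrite /image vB (main_clause_uniq AF vA).
rewrite ex in vA; rewrite -[neglit v]/(compl (poslit v)) ex complK in vB.
exists A; first by split=> //; exact: neq_main_of_compl_x.
by rewrite /image vA fsetUC (main_clause_uniq BF vB).
Qed.

Lemma ldeg_DP_gt1_images G1 G2 z : G1 \in F -> G2 \in F -> G1 != C -> G2 != C ->
  G1 != G2 -> z \in image G1 -> z \in image G2 -> 1 < ldeg (DP v F) z.
Proof.
move=> G1F G2F G1C G2C G12 z1 z2; apply/ldeg_gt1P.
exists (image G1), (image G2); split; rewrite ?image_in_DP //.
by apply: contraNneq G12 => /(image_inj G1F G2F G1C G2C) ->.
Qed.

Lemma ldeg_DP_main_gt1 z : lvar z != v -> z \in C -> 1 < ldeg F (compl x) ->
  1 < ldeg (DP v F) z.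
Proof.
move=> zv zC /ldeg_gt1P [G1 [G2 [G1F xG1 G2F xG2 G12]]].
exact: ldeg_DP_gt1_images G1F G2F (neq_main_of_compl_x xG1) (neq_main_of_compl_x xG2) G12
  (mem_image_main zv xG1 zC) (mem_image_main zv xG2 zC).
Qed.

Lemma ldeg_DP_gt1 z : lvar z != v -> 1 < ldeg F (compl x) -> 1 < ldeg F z ->
  1 < ldeg (DP v F) z.
Proof.
move=> zv x_gt1; have [zC _|zC] := boolP (z \in C); first exact: ldeg_DP_main_gt1.
move=> /ldeg_gt1P [G1 [G2 [G1F zG1 G2F zG2 G12]]].
have notC G : z \in G -> G != C by move=> zG; apply: contraNneq zC => <-.
exact: ldeg_DP_gt1_images G1F G2F (notC _ zG1) (notC _ zG2) G12
  (mem_image zv zG1) (mem_image zv zG2).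
Qed.

Lemma ldeg_DP_eq1 D y : lvar y != v -> ldeg F y = 1 -> D \in F -> y \in D -> D != C ->
  ldeg (DP v F) y = 1.
Proof.
move=> yv y1 DF yD DC; apply/eqP/cardfs1P; exists (image D).
apply/fsetP => K; rewrite in_occurrences in_fset1; apply/andP/eqP => [[KDP yK]|->].
  have [G [GF GC] eK] := image_surj KDP; rewrite eK in yK *; congr image.
  case: (image_sub yK) => [yG|yC]; first exact: ldeg1_clause_uniq y1 GF yG DF yD.
  by rewrite (ldeg1_clause_uniq y1 DF yD C_in_F yC) eqxx in DC.
by rewrite image_in_DP ?mem_image.
Qed.

End SingularElimination.

Lemma DP_effect_on_other_singular (V : choiceType) (F : {fset {fset lit V}}) (v w : V)
    (C D : {fset lit V}) :
  is_clause_set F -> MU F -> v <> w ->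
  non1singular F v -> non1singular F w ->
  main_clause F v C -> main_clause F w D ->
  (C = D -> ~ singular (DP v F) w) /\ (C <> D -> non1singular (DP v F) w).
Proof.
move=> cls [unsat min] vw nv nw [CF [x [xv x1 xC]]] [DF [y [yv y1 yD]]].
have x'_gt1 := non1singular_ldeg_compl nv xv x1.
have yv' : lvar y != v by rewrite yv; apply/eqP/nesym.
have y'_gt1 : 1 < ldeg (DP v F) (compl y).
  exact: (ldeg_DP_gt1 (z := compl y) cls unsat min CF xC xv x1 yv' x'_gt1)
    (non1singular_ldeg_compl nw yv y1).
split=> CD.
  apply: (not_singular_of_ldeg yv _ y'_gt1).
  have yC : y \in C by rewrite CD.
  exact: (ldeg_DP_main_gt1 cls unsat min CF xC xv x1 yv' yC x'_gt1).
apply: (non1singular_of_ldeg yv _ y'_gt1).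
have DC : D != C by apply/eqP => DC; apply: CD.
exact: (ldeg_DP_eq1 cls unsat min CF xC xv x1 yv' y1 DF yD DC).
Qed.

Theorem lemma37 (V : choiceType) (F : {fset {fset lit V}}) (v w : V)
    (C D : {fset lit V}) :
  is_clause_set F -> MU F -> v <> w ->
  non1singular F v -> non1singular F w ->
  main_clause F v C -> main_clause F w D ->
  (C = D -> ~ singular (DP v F) w /\ ~ singular (DP w F) v) /\
  (C <> D -> non1singular (DP v F) w /\ non1singular (DP w F) v).
Proof.
move=> cls mu vw nv nw mC mD.
have [same_v diff_v] := DP_effect_on_other_singular cls mu vw nv nw mC mD.
have [same_w diff_w] := DP_effect_on_other_singular cls mu (nesym vw) nw nv mD mC.
split=> CD; split; [exact: same_v | exact: same_w (esym CD) | exact: diff_v |].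
by apply: diff_w => DC; apply: CD.
Qed.
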